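(* Assume the Framework and the Purification Postulate. Let $\{\rho_i\}_{i\in X}$ be a preparation-test for system $\mathrm A$ (a test from $\mathrm I$ to $\mathrm A$), let $\rho:=\sum_{i\in X}\rho_i$, and let $\Psi\in\mathfrak S_1(\mathrm A\mathrm B)$ be any purification of $\rho$. Then there is an observation-test $\{b_i\}_{i\in X}$ on $\mathrm B$ (a test from $\mathrm B$ to $\mathrm I$) such that $\rho_i=(\mathcal I_{\mathrm A}\otimes b_i)\Psi$ for every $i\in X$. Moreover, the purifying system $\mathrm B$ and the purification $\Psi$ can be chosen such that the observation-test $\{b_i\}_{i\in X}$ with this property is discriminating, i.e. there are normalized states $\{\sigma_i\}_{i\in X}\subseteq\mathfrak S_1(\mathrm B)$ with $(b_j|\sigma_i)=\delta_{ij}$.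
   Context: Framework. We work in an operational-probabilistic theory: there is a collection of systems $\mathrm A,\mathrm B,\dots$, closed under a composition $\mathrm A\mathrm B$ (associative, symmetric up to a reversible swap, with a trivial system $\mathrm I$ satisfying $\mathrm A\mathrm I=\mathrm A$); for each pair of systems a set $\mathfrak T(\mathrm A,\mathrm B)$ of transformations; a test from $\mathrm A$ to $\mathrm B$ is a finite collection $\{\mathcal C_i\}_{i\in X}\subseteq\mathfrak T(\mathrm A,\mathrm B)$, and every transformation belongs to some test. Tests are closed under sequential composition, parallel composition ($\otimes$), coarse-graining (summing outcomes over the blocks of a partition of $X$) and conditioning (choosing the next test depending on the outcome of the previous one). States of $\mathrm A$ are the elements of $\mathfrak S(\mathrm A):=\mathfrak T(\mathrm I,\mathrm A)$, effects are the elements of $\mathfrak T(\mathrm A,\mathrm I)$, and transformations $\mathrm I\to\mathrm I$ are probabilities in $[0,1]$ (those of a test sum to $1$; composition is multiplication). An effect $a$ and a state $\rho$ give the probability $(a|\rho)$. States (effects) are identified when they give equal probabilities on all effects (states); transformations $\mathcal C,\mathcal C'$ are identified when $\mathcal C\otimes\mathcal I_{\mathrm S}$ and $\mathcal C'\otimes\mathcal I_{\mathrm S}$ act identically on all states of $\mathrm A\mathrm S$ for every system $\mathrm S$. States span a finite-dimensional real vector space $\mathfrak S_{\mathbb R}(\mathrm A)$, transformations act linearly, and $\mathfrak T_{\mathbb R}(\mathrm A,\mathrm B)$ is the real span of $\mathfrak T(\mathrm A,\mathrm B)$. Standing assumptions: (i) causality: each system $\mathrm A$ has a unique deterministic effect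 $e_{\mathrm A}$ (the effect forming a one-outcome observation test), and $e_{\mathrm A\mathrm B}=e_{\mathrm A}\otimes e_{\mathrm B}$; (ii) local discriminability: if two states of $\mathrm A\mathrm B$ differ, some product effect $a\otimes b$ gives them different probabilities; (iii) all sets of states are closed, the theory is not deterministic (hence all sets of states, effects and transformations are convex), and perfectly distinguishable states exist. A state $\rho$ is normalized if $(e|\rho)=1$; $\mathfrak S_1(\mathrm A)$ is the set of normalized states. A channel is a $\mathcal C\in\mathfrak T(\mathrm A,\mathrm B)$ with $e_{\mathrm B}\circ\mathcal C=e_{\mathrm A}$. A channel $\mathcal U\in\mathfrak T(\mathrm A,\mathrm B)$ is reversible if some channel $\mathcal W\in\mathfrak T(\mathrm B,\mathrm A)$ satisfies $\mathcal W\mathcal U=\mathcal I_{\mathrm A}$, $\mathcal U\mathcal W=\mathcal I_{\mathrm B}$; $\mathbf G_{\mathrm A}$ is the group of reversible channels on $\mathrm A$. The marginal of a state $\sigma$ of $\mathrm A\mathrm B$ on $\mathrm A$ is $(\mathcal I_{\mathrm A}\otimes e_{\mathrm B})\sigma$. Refinement. For $\mathcal C\in\mathfrak T(\mathrm A,\mathrm B)$, write $\mathcal D\prec\mathcal C$ if there are a test $\{\mathcal D_j\}_{j\in Y}$ and $Y_0\subseteq Y$ with $\mathcal C=\sum_{j\in Y_0}\mathcal D_j$ and $\mathcal D\in\{\mathcal D_j\}_{j\in Y_0}$; the refinement set is $D_{\mathcal C}=\{\mathcal D:\mathcal D\prec\mathcal C\}$. $\mathcal C$ is atomic if $\mathcal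 D\prec\mathcal C$ implies $\mathcal D=\lambda\mathcal C$ for some $\lambda\in[0,1]$. A pure state is an atomic state; a state is mixed otherwise. Purification Postulate. For every $\rho\in\mathfrak S_1(\mathrm A)$ there are a system $\mathrm B$ and a pure $\Psi\in\mathfrak S_1(\mathrm A\mathrm B)$ with $(\mathcal I_{\mathrm A}\otimes e_{\mathrm B})\Psi=\rho$ (a purification of $\rho$, with purifying system $\mathrm B$); and if $\Psi,\Psi'\in\mathfrak S_1(\mathrm A\mathrm B)$ are purifications of the same state, then $\Psi'=(\mathcal I_{\mathrm A}\otimes\mathcal U)\Psi$ for some $\mathcal U\in\mathbf G_{\mathrm B}$. *)

(* An operational-probabilistic theory (OPT) is
   modelled abstractly: [OPTData] packages the data, [OPTAxioms] the
   Framework (with the standing assumptions (i)-(iii)), and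
   [PurificationPostulate] the postulate. *)
From Stdlib Require Import Reals.
From mathcomp Require Import ssreflect ssrfun ssrbool eqtype ssrnat seq choice fintype.

Set Implicit Arguments.
Unset Strict Implicit.

Local Open Scope R_scope.

(* Data of an OPT.  [TR A B] is the real span T_R(A,B) of the
   transformations from A to B (already quotiented by the operational
   identification); [isTrans] carves out the actual transformations
   T(A,B); [isTest f] says that the finite family [f] indexed by the
   outcome set [X] is a test.  States are [TR sI A], effects [TR A sI],
   probabilities [TR sI sI] (identified with reals through [prob]).     *)
Record OPTData := {
  Sys : Type;
  sI : Sys;
  sprod : Sys -> Sys -> Sys;
  unitR : forall A, sprod A sI = A;
  unitL : forall A, sprod sI A = A;
  assocS : forall A B C, sprod (sprod A B) C = sprod A (sprod B C);
  TR : Sys -> Sys -> Type;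
  tzero : forall A B, TR A B;
  tadd : forall A B, TR A B -> TR A B -> TR A B;
  tscal : forall A B, R -> TR A B -> TR A B;
  tcomp : forall A B C, TR B C -> TR A B -> TR A C;   (* tcomp D C = D C *)
  tid : forall A, TR A A;
  tpar : forall A B C D, TR A B -> TR C D -> TR (sprod A C) (sprod B D);
  tswap : forall A B, TR (sprod A B) (sprod B A);
  prob : TR sI sI -> R;
  deff : forall A, TR A sI;
  isTrans : forall A B, TR A B -> Prop;
  isTest : forall A B (X : finType), (X -> TR A B) -> Prop
}.

Arguments sI {o}.
Arguments sprod {o}.
Arguments unitR {o}.
Arguments unitL {o}.
Arguments assocS {o}.
Arguments TR {o}.
Arguments tzero {o A B}.
Arguments tadd {o A B}.
Arguments tscal {o A B}.
Arguments tcomp {o A B C}.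
Arguments tid {o}.
Arguments tpar {o A B C D}.
Arguments tswap {o}.
Arguments prob {o}.
Arguments deff {o}.
Arguments isTrans {o A B}.
Arguments isTest {o A B X}.

Section Defs.
Variable T : OPTData.

Definition castC {A B B' : Sys T} (e : B = B') (f : TR A B) : TR A B' :=
  match e in _ = B' return TR A B' with erefl => f end.
Definition castD {A A' B : Sys T} (e : A = A') (f : TR A B) : TR A' B :=
  match e in _ = A' return TR A' B with erefl => f end.

Definition tsum {A B : Sys T} {X : finType} (P : pred X) (f : X -> TR A B) :
  TR A B := foldr (fun x acc => tadd (f x) acc) tzero [seq x <- enum X | P x].

Definition rsum {X : finType} (g : X -> R) : R :=
  foldr (fun x acc => g x + acc) 0 (enum X).

Definition pairing {A : Sys T} (a : TR A sI) (rho : TR sI A) : R :=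
  prob (tcomp a rho).

(* (I_A (x) b) Psi, viewed (via A I = A) as an element of T_R(I,A) *)
Definition applyB {A B : Sys T} (b : TR B sI) (Psi : TR sI (sprod A B)) :
  TR sI A := castC (unitR A) (tcomp (tpar (tid A) b) Psi).

Definition marginal {A B : Sys T} (Psi : TR sI (sprod A B)) : TR sI A :=
  applyB (deff B) Psi.

Definition normalized {A : Sys T} (rho : TR sI A) : Prop :=
  isTrans rho /\ pairing (deff A) rho = 1.

Definition isChannel {A B : Sys T} (C : TR A B) : Prop :=
  isTrans C /\ tcomp (deff B) C = deff A.

Definition reversible {A B : Sys T} (U : TR A B) : Prop :=
  isChannel U /\ exists W : TR B A,
    isChannel W /\ tcomp W U = tid A /\ tcomp U W = tid B.

Definition refines {A B : Sys T} (D C : TR A B) : Prop :=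
  exists (Y : finType) (f : Y -> TR A B) (Y0 : pred Y),
    isTest f /\ C = tsum Y0 f /\ exists j, Y0 j /\ D = f j.

Definition atomic {A B : Sys T} (C : TR A B) : Prop :=
  forall D, refines D C -> exists l, 0 <= l <= 1 /\ D = tscal l C.

Definition pure {A : Sys T} (rho : TR sI A) : Prop := isTrans rho /\ atomic rho.

Definition isPurification {A B : Sys T} (rho : TR sI A)
  (Psi : TR sI (sprod A B)) : Prop :=
  normalized Psi /\ pure Psi /\ marginal Psi = rho.

End Defs.

Arguments castC {T A B B'}.
Arguments castD {T A A' B}.
Arguments tsum {T A B X}.
Arguments rsum {X}.
Arguments pairing {T A}.
Arguments applyB {T A B}.
Arguments marginal {T A B}.
Arguments normalized {T A}.
Arguments isChannel {T A B}.
Arguments reversible {T A B}.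
Arguments refines {T A B}.
Arguments atomic {T A B}.
Arguments pure {T A}.
Arguments isPurification {T A B}.

Record OPTAxioms (T : OPTData) : Prop := {
  ax_add_assoc : forall (A B : Sys T) (x y z : TR A B), tadd x (tadd y z) = tadd (tadd x y) z;
  ax_add_comm : forall (A B : Sys T) (x y : TR A B), tadd x y = tadd y x;
  ax_add0 : forall (A B : Sys T) (x : TR A B), tadd tzero x = x;
  ax_addN : forall (A B : Sys T) (x : TR A B), tadd x (tscal (-1) x) = tzero;
  ax_scal1 : forall (A B : Sys T) (x : TR A B), tscal 1 x = x;
  ax_scal_mul : forall (A B : Sys T) (r s : R) (x : TR A B), tscal r (tscal s x) = tscal (r * s) x;
  ax_scal_addr : forall (A B : Sys T) (r s : R) (x : TR A B),
      tscal (r + s) x = tadd (tscal r x) (tscal s x);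
  ax_scal_addv : forall (A B : Sys T) r (x y : TR A B),
      tscal r (tadd x y) = tadd (tscal r x) (tscal r y);
  ax_comp_assoc : forall (A B C D : Sys T) (f : TR A B) (g : TR B C) (h : TR C D),
      tcomp h (tcomp g f) = tcomp (tcomp h g) f;
  ax_comp_idl : forall (A B : Sys T) (f : TR A B), tcomp (tid B) f = f;
  ax_comp_idr : forall (A B : Sys T) (f : TR A B), tcomp f (tid A) = f;
  ax_comp_addl : forall (A B C : Sys T) (g g' : TR B C) (f : TR A B),
      tcomp (tadd g g') f = tadd (tcomp g f) (tcomp g' f);
  ax_comp_addr : forall (A B C : Sys T) (g : TR B C) (f f' : TR A B),
      tcomp g (tadd f f') = tadd (tcomp g f) (tcomp g f');
  ax_comp_scall : forall (A B C : Sys T) r (g : TR B C) (f : TR A B),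
      tcomp (tscal r g) f = tscal r (tcomp g f);
  ax_comp_scalr : forall (A B C : Sys T) r (g : TR B C) (f : TR A B),
      tcomp g (tscal r f) = tscal r (tcomp g f);
  ax_par_addl : forall (A B C D : Sys T) (f f' : TR A B) (g : TR C D),
      tpar (tadd f f') g = tadd (tpar f g) (tpar f' g);
  ax_par_addr : forall (A B C D : Sys T) (f : TR A B) (g g' : TR C D),
      tpar f (tadd g g') = tadd (tpar f g) (tpar f g');
  ax_par_scall : forall (A B C D : Sys T) r (f : TR A B) (g : TR C D),
      tpar (tscal r f) g = tscal r (tpar f g);
  ax_par_scalr : forall (A B C D : Sys T) r (f : TR A B) (g : TR C D),
      tpar f (tscal r g) = tscal r (tpar f g);
  ax_par_comp : forall (A B C A' B' C' : Sys T) (f : TR A B) (g : TR B C)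
      (f' : TR A' B') (g' : TR B' C'),
      tpar (tcomp g f) (tcomp g' f') = tcomp (tpar g g') (tpar f f');
  ax_par_id : forall (A B : Sys T), tpar (tid A) (tid B) = tid (sprod A B);
  ax_par_assoc : forall (A B C D E F : Sys T) (f : TR A B) (g : TR C D) (h : TR E F),
      castD (assocS A C E) (castC (assocS B D F) (tpar (tpar f g) h))
      = tpar f (tpar g h);
  ax_par_scalar_r : forall (A B : Sys T) (f : TR A B) (p : TR (@sI T) (@sI T)),
      castD (unitR A) (castC (unitR B) (tpar f p)) = tscal (prob p) f;
  ax_par_scalar_l : forall (A B : Sys T) (f : TR A B) (p : TR (@sI T) (@sI T)),
      castD (unitL A) (castC (unitL B) (tpar p f)) = tscal (prob p) f;
  ax_swap_nat : forall (A B C D : Sys T) (f : TR A B) (g : TR C D),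
      tcomp (tswap B D) (tpar f g) = tcomp (tpar g f) (tswap A C);
  ax_swap_inv : forall (A B : Sys T), tcomp (tswap B A) (tswap A B) = tid (sprod A B);
  ax_prob_inj : forall p q : TR (@sI T) (@sI T), prob p = prob q -> p = q;
  ax_prob_surj : forall r : R, exists p : TR (@sI T) (@sI T), prob p = r;
  ax_prob_add : forall p q : TR (@sI T) (@sI T), prob (tadd p q) = prob p + prob q;
  ax_prob_scal : forall r (p : TR (@sI T) (@sI T)), prob (tscal r p) = r * prob p;
  ax_prob_id : prob (tid (@sI T)) = 1;
  ax_prob_comp : forall p q : TR (@sI T) (@sI T), prob (tcomp p q) = prob p * prob q;
  ax_prob_trans : forall p : TR (@sI T) (@sI T), isTrans p <-> 0 <= prob p <= 1;
  ax_prob_test : forall (X : finType) (f : X -> TR (@sI T) (@sI T)),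
      isTest f -> rsum (fun x => prob (f x)) = 1;
  ax_trans_test : forall (A B : Sys T) (C : TR A B),
      isTrans C <-> exists (X : finType) (f : X -> TR A B) (x : X),
                      isTest f /\ f x = C;
  ax_test_id : forall (A : Sys T), isTest (fun _ : unit => tid A);
  ax_test_swap : forall (A B : Sys T), isTest (fun _ : unit => tswap A B);
  ax_test_cond : forall (A B C : Sys T) (X : finType) (Y : X -> finType)
      (f : X -> TR A B) (g : forall x, Y x -> TR B C),
      isTest f -> (forall x, isTest (g x)) ->
      isTest (fun p : {x : X & Y x} => tcomp (g (tag p) (tagged p)) (f (tag p)));
  ax_test_par : forall (A B C D : Sys T) (X Y : finType) (f : X -> TR A B) (g : Y -> TR C D),
      isTest f -> isTest g -> isTest (fun p : X * Y => tpar (f p.1) (g p.2));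
  ax_test_coarse : forall (A B : Sys T) (X Y : finType) (f : X -> TR A B) (h : X -> Y),
      isTest f -> (forall y, exists x, h x = y) ->
      isTest (fun y => tsum (fun x => h x == y) f);
  ax_test_convex : forall (A B : Sys T) (X : finType) (f g : X -> TR A B) (p : R),
      isTest f -> isTest g -> 0 <= p <= 1 ->
      isTest (fun x => tadd (tscal p (f x)) (tscal (1 - p) (g x)));
  ax_deff_test : forall (A : Sys T), isTest (fun _ : unit => deff A);
  ax_deff_unique : forall (A : Sys T) (a : unit -> TR A (@sI T)), isTest a -> a tt = deff A;
  ax_deff_prod : forall (A B : Sys T),
      deff (sprod A B) = castC (unitR (@sI T)) (tpar (deff A) (deff B));
  ax_state_ext : forall (A : Sys T) (rho rho' : TR (@sI T) A),
      (forall a : TR A (@sI T), isTrans a -> pairing a rho = pairing a rho') -> rho = rho';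
  ax_effect_ext : forall (A : Sys T) (a a' : TR A (@sI T)),
      (forall rho : TR (@sI T) A, isTrans rho -> pairing a rho = pairing a' rho) -> a = a';
  ax_trans_ext : forall (A B : Sys T) (C C' : TR A B),
      (forall S (psi : TR (@sI T) (sprod A S)), isTrans psi ->
         tcomp (tpar C (tid S)) psi = tcomp (tpar C' (tid S)) psi) -> C = C';
  ax_span : forall (A B : Sys T) (x : TR A B), exists (n : nat) (r : 'I_n -> R) (C : 'I_n -> TR A B),
      (forall i, isTrans (C i)) /\ x = tsum predT (fun i => tscal (r i) (C i));
  ax_findim : forall (A : Sys T), exists (n : nat) (v : 'I_n -> TR (@sI T) A),
      forall x : TR (@sI T) A, exists r : 'I_n -> R, x = tsum predT (fun i => tscal (r i) (v i));
  ax_local_discr : forall (A B : Sys T) (s s' : TR (@sI T) (sprod A B)), isTrans s -> isTrans s' ->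
      (forall (a : TR A (@sI T)) (b : TR B (@sI T)), isTrans a -> isTrans b ->
         prob (castC (unitR (@sI T)) (tcomp (tpar a b) s))
         = prob (castC (unitR (@sI T)) (tcomp (tpar a b) s'))) -> s = s';
  ax_closed : forall (A : Sys T) (rhon : nat -> TR (@sI T) A) (rho : TR (@sI T) A),
      (forall n, isTrans (rhon n)) ->
      (forall a : TR A (@sI T), isTrans a ->
         Un_cv (fun n => pairing a (rhon n)) (pairing a rho)) ->
      isTrans rho;
  ax_perf_dist : exists (A : Sys T) (rho : bool -> TR (@sI T) A) (a : bool -> TR A (@sI T)),
      (forall i, normalized (rho i)) /\ isTest a /\
      forall i j, pairing (a j) (rho i) = if i == j then 1 else 0
}.

Definition PurificationPostulate (T : OPTData) : Prop :=
  (forall (A : Sys T) (rho : TR sI A), normalized rho ->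
     exists (B : Sys T) (Psi : TR sI (sprod A B)), isPurification rho Psi) /\
  (forall (A B : Sys T) (Psi Psi' : TR sI (sprod A B)),
     (exists rho : TR sI A, isPurification rho Psi /\ isPurification rho Psi') ->
     exists U : TR B B, reversible U /\ Psi' = tcomp (tpar (tid A) U) Psi).

(* Flagged mixture: with deterministic states {alpha_i} of a system C,
   perfectly discriminated by a test {c_i} (tensor powers of the framework's
   distinguishable pair), purify Sigma = sum_i rho_i (x) alpha_i by Phi on
   ACD.  Then Phi purifies rho on A(CD), c_i (x) e_D steers it onto rho_i, and
   alpha_i (x) eta (eta the marginal of Phi on D) discriminates these effects.

   Transfer: if a test steers a purification Phi of rho, then for any
   purification Psi both Psi (x) Phi and Phi (x) Psi, regrouped on A(B(AP)),
   purify rho (products of pure states are pure by local discriminability;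
   regrouping is reversible); uniqueness of purification relates them by a
   reversible U, along which the steering test is carried over to B. *)
From HB Require Import structures.
From Stdlib Require Import Reals Lra ProofIrrelevance FunctionalExtensionality.
From mathcomp Require Import ssreflect ssrfun ssrbool eqtype ssrnat seq choice fintype bigop.

Set Implicit Arguments.
Unset Strict Implicit.
Local Open Scope R_scope.

Lemma RplusA : associative Rplus. Proof. by move=> x y z; lra. Qed.
Lemma RplusC : commutative Rplus. Proof. by move=> x y; lra. Qed.
Lemma Rplus0 : left_id 0 Rplus. Proof. by move=> x; lra. Qed.
HB.instance Definition _ := Monoid.isComLaw.Build R 0 Rplus RplusA RplusC Rplus0.

Lemma sumR_ge0 (X : finType) (P : pred X) (F : X -> R) :
  (forall x, P x -> 0 <= F x) -> 0 <= \big[Rplus/0]_(x | P x) F x.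
Proof.
move=> F_ge0; apply: (big_ind (fun r => 0 <= r)) => //; [lra | move=> ? ? ? ?; lra].
Qed.

Lemma sumR_eq0 (X : finType) (P : pred X) (F : X -> R) (x0 : X) :
  (forall x, P x -> 0 <= F x) -> \big[Rplus/0]_(x | P x) F x = 0 -> P x0 -> F x0 = 0.
Proof.
move=> F_ge0 + Px0; rewrite (bigD1 x0) //=.
have := sumR_ge0 (P := fun x => P x && (x != x0)) (fun x hx => F_ge0 x (andP hx).1).
have := F_ge0 x0 Px0; lra.
Qed.

Lemma sumR_delta (Y : finType) (P : pred Y) (q : Y) :
  \big[Rplus/0]_(p | P p) (if p == q then 1 else 0) = if P q then 1 else 0.
Proof.
case: (boolP (P q)) => Pq.
  by rewrite (bigD1 q) //= eqxx big1 ?Rplus_0_r // => p /andP [_ /negbTE ->].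
by rewrite big1 // => p Pp; case: eqP => // epq; move: Pq; rewrite -epq Pp.
Qed.

Lemma rsumE (X : finType) (g : X -> R) : rsum g = \big[Rplus/0]_x g x.
Proof.
rewrite /rsum /index_enum -enumT.
by elim: (enum X) => [|x s IH]; rewrite ?big_nil ?big_cons //= IH.
Qed.

Section OperationalCalculus.
Variable T : OPTData.
Hypothesis HT : OPTAxioms T.

Local Notation Sy := (Sys T).
Local Notation I := (@sI T).

Lemma taddA (A B : Sy) : associative (@tadd T A B).
Proof. by move=> x y z; rewrite (ax_add_assoc HT). Qed.
Lemma taddC (A B : Sy) : commutative (@tadd T A B).
Proof. by move=> x y; rewrite (ax_add_comm HT). Qed.
Lemma add0t (A B : Sy) : left_id (@tzero T A B) (@tadd T A B).
Proof. by move=> x; rewrite (ax_add0 HT). Qed.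
HB.instance Definition _ (A B : Sy) :=
  Monoid.isComLaw.Build (TR A B) tzero tadd (@taddA A B) (@taddC A B) (@add0t A B).

Lemma addt0 (A B : Sy) (x : TR A B) : tadd x tzero = x.
Proof. by rewrite taddC add0t. Qed.

Lemma addtI (A B : Sy) (x y z : TR A B) : tadd x y = tadd x z -> y = z.
Proof.
have addKt w : tadd (tscal (-1) x) (tadd x w) = w.
  by rewrite taddA [tadd _ x]taddC (ax_addN HT) add0t.
by move=> exy; rewrite -(addKt y) exy addKt.
Qed.

Lemma scal0t (A B : Sy) (x : TR A B) : tscal 0 x = tzero.
Proof.
apply: (@addtI _ _ (tscal 0 x)); rewrite addt0 -(ax_scal_addr HT).
by rewrite Rplus_0_r.
Qed.

Lemma comp0t (A B C : Sy) (g : TR B C) : tcomp g (@tzero T A B) = tzero.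
Proof. by rewrite -(scal0t tzero) (ax_comp_scalr HT) scal0t. Qed.
Lemma compt0 (A B C : Sy) (f : TR A B) : tcomp (@tzero T B C) f = tzero.
Proof. by rewrite -(scal0t tzero) (ax_comp_scall HT) scal0t. Qed.
Lemma par0t (A B C D : Sy) (g : TR C D) : tpar (@tzero T A B) g = tzero.
Proof. by rewrite -(scal0t tzero) (ax_par_scall HT) scal0t. Qed.
Lemma part0 (A B C D : Sy) (f : TR A B) : tpar f (@tzero T C D) = tzero.
Proof. by rewrite -(scal0t tzero) (ax_par_scalr HT) scal0t. Qed.
Lemma prob0 : prob (@tzero T I I) = 0.
Proof. by rewrite -(scal0t tzero) (ax_prob_scal HT) Rmult_0_l. Qed.

Lemma tsumE (A B : Sy) (X : finType) (P : pred X) (f : X -> TR A B) :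
  tsum P f = \big[tadd/tzero]_(x | P x) f x.
Proof.
rewrite /tsum -big_filter /index_enum -enumT.
by elim: [seq x <- enum X | P x] => [|x s IH]; rewrite ?big_nil ?big_cons //= IH.
Qed.

Lemma tsum_map (A B C D : Sy) (X : finType) (P : pred X) (f : X -> TR A B)
    (L : TR A B -> TR C D) :
  (forall x y, L (tadd x y) = tadd (L x) (L y)) -> L tzero = tzero ->
  L (tsum P f) = tsum P (fun x => L (f x)).
Proof. by move=> Ladd L0; rewrite !tsumE; exact: (big_morph L Ladd L0). Qed.

Lemma tsum_compl (A B C : Sy) (X : finType) (P : pred X) (g : TR B C) (f : X -> TR A B) :
  tcomp g (tsum P f) = tsum P (fun x => tcomp g (f x)).
Proof. by apply: tsum_map; [move=> ? ?; rewrite (ax_comp_addr HT) | exact: comp0t]. Qed.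
Lemma tsum_compr (A B C : Sy) (X : finType) (P : pred X) (g : TR A B) (f : X -> TR B C) :
  tcomp (tsum P f) g = tsum P (fun x => tcomp (f x) g).
Proof.
by apply: (tsum_map _ _ (L := tcomp^~ g)); [move=> ? ?; rewrite (ax_comp_addl HT) | exact: compt0].
Qed.
Lemma tsum_parl (A B C D : Sy) (X : finType) (P : pred X) (g : TR C D) (f : X -> TR A B) :
  tpar (tsum P f) g = tsum P (fun x => tpar (f x) g).
Proof.
by apply: (tsum_map _ _ (L := tpar^~ g)); [move=> ? ?; rewrite (ax_par_addl HT) | exact: par0t].
Qed.
Lemma tsum_parr (A B C D : Sy) (X : finType) (P : pred X) (g : TR C D) (f : X -> TR A B) :
  tpar g (tsum P f) = tsum P (fun x => tpar g (f x)).
Proof. by apply: tsum_map; [move=> ? ?; rewrite (ax_par_addr HT) | exact: part0]. Qed.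

Lemma prob_tsum (X : finType) (P : pred X) (f : X -> TR I I) :
  prob (tsum P f) = \big[Rplus/0]_(x | P x) prob (f x).
Proof. by rewrite tsumE; apply: (big_morph _ (ax_prob_add HT) prob0). Qed.

Lemma tsum_delta (A B : Sy) (X : finType) (r : X -> TR A B) (x : X) (d : X -> R) :
  (forall y, d y = if y == x then 1 else 0) ->
  tsum predT (fun y => tscal (d y) (r y)) = r x.
Proof.
move=> dE; rewrite tsumE (bigD1 x) //= dE eqxx (ax_scal1 HT) big1 ?addt0 //.
by move=> y /negbTE ney; rewrite dE ney scal0t.
Qed.


Definition cst (A B : Sy) (e : A = B) : TR A B := castC e (tid A).

Lemma castCE (A B B' : Sy) (e : B = B') (f : TR A B) : castC e f = tcomp (cst e) f.
Proof. by case: _ / e; rewrite /cst /= (ax_comp_idl HT). Qed.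
Lemma castDE (A A' B : Sy) (e : A = A') (f : TR A B) : castD e f = tcomp f (cst (esym e)).
Proof. by case: _ / e; rewrite /cst /= (ax_comp_idr HT). Qed.

Lemma cst_pi (A B : Sy) (e1 e2 : A = B) : cst e1 = cst e2.
Proof. by rewrite (proof_irrelevance _ e1 e2). Qed.
Lemma cst_refl (A : Sy) (e : A = A) : cst e = tid A.
Proof. by rewrite (cst_pi e erefl). Qed.
Lemma cstK (A B C : Sy) (e1 : A = B) (e2 : B = C) :
  tcomp (cst e2) (cst e1) = cst (etrans e1 e2).
Proof. by case: _ / e2; rewrite /cst /= (ax_comp_idl HT). Qed.
Lemma cstK_comp (A B C D : Sy) (e1 : A = B) (e2 : B = C) (f : TR D A) :
  tcomp (cst e2) (tcomp (cst e1) f) = tcomp (cst (etrans e1 e2)) f.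
Proof. by rewrite (ax_comp_assoc HT) cstK. Qed.
Lemma par_cst (A B C D : Sy) (e1 : A = B) (e2 : C = D) (e3 : sprod A C = sprod B D) :
  tpar (cst e1) (cst e2) = cst e3.
Proof. by subst B D; rewrite (cst_refl e3) /cst /= (ax_par_id HT). Qed.
Lemma par_id_cst (A B C : Sy) (e : B = C) : tpar (tid A) (cst e) = cst (f_equal (sprod A) e).
Proof. by rewrite -(cst_refl (erefl A)); exact: par_cst. Qed.

Ltac norm := repeat progress rewrite
  -?(ax_comp_assoc HT) ?(ax_comp_scall HT) ?(ax_comp_scalr HT)
  ?cstK_comp ?cstK ?cst_refl ?(ax_comp_idl HT) ?(ax_comp_idr HT).

Lemma par_compl (A B C D : Sy) (f : TR A B) (g : TR B C) :
  tpar (tid D) (tcomp g f) = tcomp (tpar (tid D) g) (tpar (tid D) f).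
Proof. by rewrite -(ax_par_comp HT) (ax_comp_idl HT). Qed.
Lemma par_compr (A B C D : Sy) (f : TR A B) (g : TR B C) :
  tpar (tcomp g f) (tid D) = tcomp (tpar g (tid D)) (tpar f (tid D)).
Proof. by rewrite -(ax_par_comp HT) (ax_comp_idl HT). Qed.

Lemma par_scal_r (A B : Sy) (f : TR A B) (p : TR I I) :
  tpar f p = tscal (prob p) (tcomp (cst (esym (unitR B))) (tcomp f (cst (unitR A)))).
Proof.
by rewrite -(ax_comp_scalr HT) -(ax_comp_scall HT) -(ax_par_scalar_r HT f p) castDE castCE; norm.
Qed.
Lemma par_scal_l (A B : Sy) (f : TR A B) (p : TR I I) :
  tpar p f = tscal (prob p) (tcomp (cst (esym (unitL B))) (tcomp f (cst (unitL A)))).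
Proof.
by rewrite -(ax_comp_scalr HT) -(ax_comp_scall HT) -(ax_par_scalar_l HT f p) castDE castCE; norm.
Qed.
Lemma par_id_r (A B : Sy) (f : TR A B) :
  tpar f (tid I) = tcomp (cst (esym (unitR B))) (tcomp f (cst (unitR A))).
Proof. by rewrite par_scal_r (ax_prob_id HT) (ax_scal1 HT). Qed.
Lemma par_id_l (A B : Sy) (f : TR A B) :
  tpar (tid I) f = tcomp (cst (esym (unitL B))) (tcomp f (cst (unitL A))).
Proof. by rewrite par_scal_l (ax_prob_id HT) (ax_scal1 HT). Qed.
Lemma par_assoc (A B C D E F : Sy) (f : TR A B) (g : TR C D) (h : TR E F) :
  tpar f (tpar g h)
  = tcomp (cst (assocS B D F)) (tcomp (tpar (tpar f g) h) (cst (esym (assocS A C E)))).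
Proof. by rewrite -(ax_par_assoc HT) castDE castCE (ax_comp_assoc HT). Qed.

Definition prod_state (A B : Sy) (psi : TR I A) (phi : TR I B) : TR I (sprod A B) :=
  tcomp (tpar psi phi) (cst (esym (unitR I))).
Definition prod_effect (A B : Sy) (a : TR A I) (b : TR B I) : TR (sprod A B) I :=
  castC (unitR I) (tpar a b).
Definition applyA (A B : Sy) (a : TR A I) (s : TR I (sprod A B)) : TR I B :=
  castC (unitL B) (tcomp (tpar a (tid B)) s).
Definition append (A C : Sy) (alpha : TR I C) : TR A (sprod A C) :=
  tcomp (tpar (tid A) alpha) (cst (esym (unitR A))).

Lemma pairing_scal (A : Sy) (a : TR A I) r (s : TR I A) :
  pairing a (tscal r s) = r * pairing a s.
Proof. by rewrite /pairing (ax_comp_scalr HT) (ax_prob_scal HT). Qed.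

Lemma applyB_prod (A B : Sy) (b : TR B I) (psi : TR I A) (phi : TR I B) :
  applyB b (prod_state psi phi) = tscal (pairing b phi) psi.
Proof.
rewrite /applyB /prod_state castCE (ax_comp_assoc HT _ (tpar psi phi)).
by rewrite -(ax_par_comp HT) (ax_comp_idl HT) par_scal_r; norm.
Qed.
Lemma applyA_prod (A B : Sy) (a : TR A I) (psi : TR I A) (phi : TR I B) :
  applyA a (prod_state psi phi) = tscal (pairing a psi) phi.
Proof.
rewrite /applyA /prod_state castCE (ax_comp_assoc HT _ (tpar psi phi)).
by rewrite -(ax_par_comp HT) (ax_comp_idl HT) par_scal_l; norm.
Qed.

Lemma pairing_prod_applyB (A B : Sy) (a : TR A I) (b : TR B I) (s : TR I (sprod A B)) :
  pairing (prod_effect a b) s = pairing a (applyB b s).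
Proof.
rewrite /pairing /prod_effect /applyB !castCE.
have -> : tpar a b = tcomp (tpar a (tid I)) (tpar (tid A) b).
  by rewrite -(ax_par_comp HT) (ax_comp_idl HT) (ax_comp_idr HT).
by rewrite par_id_r; norm.
Qed.
Lemma pairing_prod_applyA (A B : Sy) (a : TR A I) (b : TR B I) (s : TR I (sprod A B)) :
  pairing (prod_effect a b) s = pairing b (applyA a s).
Proof.
rewrite /pairing /prod_effect /applyA !castCE.
have -> : tpar a b = tcomp (tpar (tid I) b) (tpar a (tid B)).
  by rewrite -(ax_par_comp HT) (ax_comp_idl HT) (ax_comp_idr HT).
by rewrite par_id_l; norm.
Qed.
Lemma pairing_prod (A B : Sy) (a : TR A I) (b : TR B I) (psi : TR I A) (phi : TR I B) :
  pairing (prod_effect a b) (prod_state psi phi) = pairing a psi * pairing b phi.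
Proof. by rewrite pairing_prod_applyB applyB_prod pairing_scal Rmult_comm. Qed.

Lemma applyB_comp (A B B' : Sy) (b : TR B' I) (M : TR B B') (s : TR I (sprod A B)) :
  applyB (tcomp b M) s = applyB b (tcomp (tpar (tid A) M) s).
Proof. by rewrite /applyB !castCE par_compl; norm. Qed.

Lemma applyB_assoc (A C D : Sy) (b : TR C I) (d : TR D I) (Phi : TR I (sprod (sprod A C) D)) :
  applyB (prod_effect b d) (castC (assocS A C D) Phi) = applyB b (applyB d Phi).
Proof.
rewrite /applyB /prod_effect !castCE par_compl par_id_cst par_assoc.
have -> : tpar (tpar (tid A) b) d
          = tcomp (tpar (tpar (tid A) b) (tid I)) (tpar (tid (sprod A C)) d).
  by rewrite -(ax_par_comp HT) (ax_comp_idl HT) (ax_comp_idr HT).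
by rewrite par_id_r; norm; rewrite (cst_pi _ (unitR A)).
Qed.

Lemma applyB_append (A C : Sy) (b : TR C I) (alpha : TR I C) (r : TR I A) :
  applyB b (tcomp (append A alpha) r) = tscal (pairing b alpha) r.
Proof.
rewrite /applyB /append castCE; norm.
by rewrite (ax_comp_assoc HT _ (tpar (tid A) alpha)) -par_compl par_scal_r; norm.
Qed.

Lemma append_ancilla (A B Q : Sy) (Psi : TR I (sprod A B)) (Phi : TR I Q) :
  tcomp (tpar (tid A) (append B Phi)) Psi = castC (assocS A B Q) (prod_state Psi Phi).
Proof.
rewrite /append par_compl par_id_cst par_assoc (ax_par_id HT) /prod_state castCE.
have -> : tpar Psi Phi = tcomp (tpar (tid (sprod A B)) Phi) (tpar Psi (tid I)).
  by rewrite -(ax_par_comp HT) (ax_comp_idl HT) (ax_comp_idr HT).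
by rewrite par_id_r; norm; rewrite (cst_pi _ (esym (unitR (sprod A B)))).
Qed.

Lemma test_ext (A B : Sy) (X : finType) (f g : X -> TR A B) :
  (forall x, f x = g x) -> isTest f -> isTest g.
Proof. by move=> efg; rewrite (functional_extensionality _ _ efg). Qed.

Lemma test_trans (A B : Sy) (X : finType) (f : X -> TR A B) x : isTest f -> isTrans (f x).
Proof. by move=> Hf; apply/(ax_trans_test HT); exists X, f, x. Qed.

Lemma test_reindex (A B : Sy) (X Y : finType) (f : X -> TR A B) (g : Y -> X) (h : X -> Y) :
  cancel g h -> cancel h g -> isTest f -> isTest (fun y => f (g y)).
Proof.
move=> gK hK Hf.
have := ax_test_coarse HT (h := h) Hf (fun y => ex_intro _ (g y) (gK y)).
apply: test_ext => y; rewrite tsumE (big_pred1 (g y)) // => x /=.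
by apply/eqP/eqP => [<-|->].
Qed.

Lemma test_seq (A B C : Sy) (X Y : finType) (f : X -> TR A B) (g : Y -> TR B C) :
  isTest f -> isTest g -> isTest (fun p : X * Y => tcomp (g p.2) (f p.1)).
Proof.
move=> Hf Hg.
have := ax_test_cond HT (Y := fun _ => Y) (g := fun x => g) Hf (fun _ => Hg).
move/(test_reindex (g := fun p : X * Y => existT (fun _ => Y) p.1 p.2)
                   (h := fun s : {x : X & Y} => (tag s, tagged s))).
by apply; [case | case].
Qed.

Lemma test_total (A B : Sy) (X : finType) (f : X -> TR A B) (x0 : X) :
  isTest f -> isTest (fun _ : unit => tsum predT f).
Proof.
move=> Hf; have onto (y : unit) : exists x : X, tt = y by exists x0; case: y.
have := ax_test_coarse HT (h := fun _ => tt) Hf onto.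
by apply: test_ext => -[]; rewrite !tsumE; apply: eq_bigl.
Qed.

Definition det (A B : Sy) (V : TR A B) := isTest (fun _ : unit => V).

Lemma det_trans (A B : Sy) (V : TR A B) : det V -> isTrans V.
Proof. exact: test_trans. Qed.

Lemma test_detl (A B C : Sy) (X : finType) (f : X -> TR A B) (V : TR B C) :
  isTest f -> det V -> isTest (fun x => tcomp V (f x)).
Proof.
move=> Hf HV; move: (test_seq Hf HV).
move/(test_reindex (g := fun x : X => (x, tt)) (h := fun p : X * unit => p.1)).
by apply => //; case=> ? [].
Qed.
Lemma test_detr (A B C : Sy) (X : finType) (f : X -> TR B C) (V : TR A B) :
  det V -> isTest f -> isTest (fun x => tcomp (f x) V).
Proof.
move=> HV Hf; move: (test_seq HV Hf).
move/(test_reindex (g := fun x : X => (tt, x)) (h := fun p : unit * X => p.2)).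
by apply => //; case=> [[]] ?.
Qed.
Lemma test_par_detr (A B C D : Sy) (X : finType) (f : X -> TR A B) (V : TR C D) :
  isTest f -> det V -> isTest (fun x => tpar (f x) V).
Proof.
move=> Hf HV; move: (ax_test_par HT Hf HV).
move/(test_reindex (g := fun x : X => (x, tt)) (h := fun p : X * unit => p.1)).
by apply => //; case=> ? [].
Qed.
Lemma test_par_detl (A B C D : Sy) (X : finType) (f : X -> TR C D) (V : TR A B) :
  det V -> isTest f -> isTest (fun x => tpar V (f x)).
Proof.
move=> HV Hf; move: (ax_test_par HT HV Hf).
move/(test_reindex (g := fun x : X => (tt, x)) (h := fun p : unit * X => p.2)).
by apply => //; case=> [[]] ?.
Qed.

Lemma det_comp (A B C : Sy) (V : TR A B) (W : TR B C) : det V -> det W -> det (tcomp W V).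
Proof. exact: test_detl. Qed.
Lemma det_par (A B C D : Sy) (V : TR A B) (W : TR C D) : det V -> det W -> det (tpar V W).
Proof. exact: test_par_detr. Qed.
Lemma det_cst (A B : Sy) (e : A = B) : det (cst e).
Proof. by case: _ / e; exact: (ax_test_id HT). Qed.
Lemma det_castC (A B B' : Sy) (e : B = B') (f : TR A B) : det f -> det (castC e f).
Proof. by move=> Hf; rewrite castCE; exact: det_comp Hf (det_cst e). Qed.
Lemma det_prod_state (A B : Sy) (psi : TR I A) (phi : TR I B) :
  det psi -> det phi -> det (prod_state psi phi).
Proof. by move=> h1 h2; exact: det_comp (det_cst _) (det_par h1 h2). Qed.
Lemma test_prod_effect (A B : Sy) (X Y : finType) (a : X -> TR A I) (b : Y -> TR B I) :
  isTest a -> isTest b -> isTest (fun p : X * Y => prod_effect (a p.1) (b p.2)).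
Proof.
move=> Ha Hb; apply: (test_ext (f := fun p => tcomp (cst (unitR I)) (tpar (a p.1) (b p.2)))).
  by move=> p; rewrite /prod_effect castCE.
exact: test_detl (ax_test_par HT Ha Hb) (det_cst _).
Qed.

Lemma test_prod_effect_deff (A B : Sy) (X : finType) (a : X -> TR A I) :
  isTest a -> isTest (fun x => prod_effect (a x) (deff B)).
Proof.
move=> Ha; move: (test_prod_effect Ha (ax_deff_test HT B)).
move/(test_reindex (g := fun x : X => (x, tt)) (h := fun p : X * unit => p.1)).
by apply => // -[? []].
Qed.

Lemma test_sum_deff (A : Sy) (X : finType) (a : X -> TR A I) (x0 : X) :
  isTest a -> tsum predT a = deff A.
Proof. by move=> Ha; exact: (ax_deff_unique HT (test_total x0 Ha)). Qed.

Lemma det_channel (A B : Sy) (V : TR A B) : det V -> tcomp (deff B) V = deff A.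
Proof. by move=> HV; exact: (ax_deff_unique HT (det_comp HV (ax_deff_test HT B))). Qed.

Lemma trans_comp (A B C : Sy) (f : TR A B) (g : TR B C) :
  isTrans f -> isTrans g -> isTrans (tcomp g f).
Proof.
move=> /(ax_trans_test HT) [X [F [x [HF <-]]]] /(ax_trans_test HT) [Y [G [y [HG <-]]]].
exact: (test_trans (x, y) (test_seq HF HG)).
Qed.
Lemma trans_par (A B C D : Sy) (f : TR A B) (g : TR C D) :
  isTrans f -> isTrans g -> isTrans (tpar f g).
Proof.
move=> /(ax_trans_test HT) [X [F [x [HF <-]]]] /(ax_trans_test HT) [Y [G [y [HG <-]]]].
exact: (test_trans (x, y) (ax_test_par HT HF HG)).
Qed.

Lemma pairing_range (A : Sy) (a : TR A I) (r : TR I A) :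
  isTrans a -> isTrans r -> 0 <= pairing a r <= 1.
Proof. by move=> Ha Hr; apply/(ax_prob_trans HT); exact: trans_comp. Qed.

Lemma pairing_tsum (A : Sy) (X : finType) (P : pred X) (a : X -> TR A I) (r : TR I A) :
  pairing (tsum P a) r = \big[Rplus/0]_(x | P x) pairing (a x) r.
Proof. by rewrite /pairing tsum_compr prob_tsum. Qed.

Lemma pairing0 (A : Sy) (a : TR A I) : pairing a tzero = 0.
Proof. by rewrite /pairing comp0t prob0. Qed.

Lemma prob_deffI : prob (deff I) = 1.
Proof. by have := ax_prob_test HT (ax_deff_test HT I); rewrite rsumE (big_pred1 tt). Qed.

(* A state of zero norm vanishes: its pairing with each effect of a test is
   a nonnegative summand of the norm. *)
Lemma state_eq0 (B : Sy) (s : TR I B) : isTrans s -> pairing (deff B) s = 0 -> s = tzero.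
Proof.
move=> Hs s_norm0; apply: (ax_state_ext HT) => a /(ax_trans_test HT) [L [a' [l0 [Ha' <-]]]].
rewrite pairing0; apply: (@sumR_eq0 _ predT (fun l => pairing (a' l) s)) => // [l _|].
  by case: (pairing_range (test_trans l Ha') Hs).
by rewrite -pairing_tsum (test_sum_deff l0 Ha').
Qed.

Lemma effects_eq0 (A : Sy) (Y : finType) (P : pred Y) (a : Y -> TR A I) :
  (forall y, isTrans (a y)) -> tsum P a = tzero -> forall y, P y -> a y = tzero.
Proof.
move=> Ha sum0 y Py; apply: (ax_effect_ext HT) => rho Hrho.
rewrite {2}/pairing compt0 prob0.
apply: (@sumR_eq0 _ P (fun y => pairing (a y) rho)) => // [x _|].
  by case: (pairing_range (Ha x) Hrho).
by rewrite -pairing_tsum sum0 /pairing compt0 prob0.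
Qed.

(* A transformation C with e o C = 0 vanishes: every output state
   (C (x) I_S) psi then has zero norm. *)
Lemma trans_eq0 (A B : Sy) (C : TR A B) :
  isTrans C -> tcomp (deff B) C = tzero -> C = tzero.
Proof.
move=> HC eC0; apply: (ax_trans_ext HT) => S psi Hpsi.
rewrite par0t compt0; apply: state_eq0.
  exact: trans_comp Hpsi (trans_par HC (test_trans tt (ax_test_id HT S))).
rewrite (ax_deff_prod HT) /pairing !castCE; norm.
rewrite (ax_comp_assoc HT _ (tpar C (tid S))) -(ax_par_comp HT) (ax_comp_idr HT) eC0.
by rewrite par0t compt0 comp0t prob0.
Qed.

Lemma test_other_outcomes_eq0 (A B : Sy) (Y : finType) (g : Y -> TR A B) (y0 : Y) :
  isTest g -> tcomp (deff B) (g y0) = deff A -> forall y, y != y0 -> g y = tzero.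
Proof.
move=> Hg ey0 y ne_yy0.
have Heg : isTest (fun y => tcomp (deff B) (g y)) by apply: test_detl Hg (ax_deff_test HT B).
have rest0 : tsum (fun y => y != y0) (fun y => tcomp (deff B) (g y)) = tzero.
  apply: (@addtI _ _ (tcomp (deff B) (g y0))); rewrite addt0.
  by move: (test_sum_deff y0 Heg); rewrite !tsumE (bigD1 y0) //= => ->; rewrite ey0.
apply: trans_eq0; first exact: test_trans.
exact: effects_eq0 (fun y => test_trans y Heg) rest0 y ne_yy0.
Qed.

Lemma channel_det (A B : Sy) (V : TR A B) : isChannel V -> det V.
Proof.
move=> [/(ax_trans_test HT) [Y [g [y0 [Hg gy0]]]] eV].
apply: (test_ext _ (test_total y0 Hg)) => -[].
rewrite tsumE (bigD1 y0) //= big1 ?addt0 // => y.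
by apply: (test_other_outcomes_eq0 Hg); rewrite gy0.
Qed.

Lemma det_normalized (A : Sy) (r : TR I A) : det r -> normalized r.
Proof. by move=> Hr; split; [exact: det_trans | rewrite /pairing (det_channel Hr) prob_deffI]. Qed.

Lemma normalized_det (A : Sy) (r : TR I A) : normalized r -> det r.
Proof.
move=> [Hr r_norm]; apply: channel_det; split => //.
by apply: (ax_prob_inj HT); rewrite prob_deffI.
Qed.

(* Purity is preserved by identifications and by reversible deterministic
   transformations (a refinement of V s pulls back along the inverse). *)
Lemma pure_cast (A B : Sy) (e : A = B) (s : TR I A) : pure s -> pure (castC e s).
Proof. by case: _ / e. Qed.

Lemma pure_reversible (S1 S2 : Sy) (s : TR I S1) (V : TR S1 S2) (W : TR S2 S1) :
  pure s -> det V -> det W -> tcomp W V = tid S1 -> tcomp V W = tid S2 -> pure (tcomp V s).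
Proof.
move=> [Hs s_atomic] HV HW WV VW; split; first exact: trans_comp Hs (det_trans HV).
move=> D [Y [f [Y0 [Hf [Vs [j [Y0j ->]]]]]]].
have : refines (tcomp W (f j)) s.
  exists Y, (fun y => tcomp W (f y)), Y0; split; first exact: test_detl Hf HW.
  split; last by exists j.
  by rewrite -tsum_compl -Vs (ax_comp_assoc HT) WV (ax_comp_idl HT).
move/s_atomic => [l [l01 eWf]]; exists l; split => //.
by rewrite -[f j](ax_comp_idl HT) -VW -(ax_comp_assoc HT) eWf (ax_comp_scalr HT).
Qed.

Lemma trans_scal (A B : Sy) (C : TR A B) k : isTrans C -> 0 <= k <= 1 -> isTrans (tscal k C).
Proof.
move=> HC k01; have [p pk] := ax_prob_surj HT k.
have Hp : isTrans p by apply/(ax_prob_trans HT); rewrite pk.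
have := trans_comp (det_trans (det_cst (esym (unitR A))))
          (trans_comp (trans_par HC Hp) (det_trans (det_cst (unitR B)))).
by rewrite par_scal_r pk; norm.
Qed.

(* If a test M maps sum_{Y0} tau onto a pure state w, then each M_l maps
   each tau_k (k in Y0) onto a multiple of w: M_l tau_k refines w. *)
Lemma refine_to_pure (S S' : Sy) (Y L : finType) (tau : Y -> TR I S) (Y0 : pred Y) (k : Y)
    (M : L -> TR S S') (w : TR I S') :
  isTest tau -> Y0 k -> isTest M -> pure w -> tcomp (tsum predT M) (tsum Y0 tau) = w ->
  forall l, exists lam, 0 <= lam <= 1 /\ tcomp (M l) (tau k) = tscal lam w.
Proof.
move=> Htau Y0k HM [_ w_atomic] Mw l; apply: w_atomic.
exists (prod Y L), (fun p => tcomp (M p.2) (tau p.1)), (fun p => Y0 p.1).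
split; first exact: test_seq.
split; last by exists (k, l).
rewrite -Mw tsum_compl tsumE; under eq_bigr => y _ do rewrite tsum_compr tsumE.
by rewrite pair_big tsumE; apply: eq_bigl => p; rewrite andbT.
Qed.

Lemma applyB_refines_prod (A B : Sy) (psi : TR I A) (phi : TR I B)
    (Y : finType) (tau : Y -> TR I (sprod A B)) (Y0 : pred Y) (k : Y) (b : TR B I) :
  normalized phi -> pure psi -> isTest tau -> Y0 k ->
  prod_state psi phi = tsum Y0 tau -> isTrans b ->
  exists lam, 0 <= lam <= 1 /\ applyB b (tau k) = tscal lam psi.
Proof.
move=> [_ phi_norm] psi_pure Htau Y0k taus /(ax_trans_test HT) [L [bt [l0 [Hbt <-]]]].
pose M l := tcomp (cst (unitR A)) (tpar (tid A) (bt l)).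
have HM : isTest M by apply: test_detl (test_par_detl (ax_test_id HT A) Hbt) (det_cst _).
have [|lam [lam01 elam]] := refine_to_pure Htau Y0k HM psi_pure _ l0.
  rewrite -taus /M -tsum_compl -tsum_parr (test_sum_deff l0 Hbt) -(ax_comp_assoc HT).
  have := applyB_prod (deff B) psi phi; rewrite /applyB castCE => ->.
  by rewrite phi_norm (ax_scal1 HT).
by exists lam; split => //; rewrite /applyB castCE (ax_comp_assoc HT).
Qed.

Lemma applyA_refines_prod (A B : Sy) (psi : TR I A) (phi : TR I B)
    (Y : finType) (tau : Y -> TR I (sprod A B)) (Y0 : pred Y) (k : Y) (a : TR A I) :
  normalized psi -> pure phi -> isTest tau -> Y0 k ->
  prod_state psi phi = tsum Y0 tau -> isTrans a ->
  exists lam, 0 <= lam <= 1 /\ applyA a (tau k) = tscal lam phi.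
Proof.
move=> [_ psi_norm] phi_pure Htau Y0k taus /(ax_trans_test HT) [L [at' [l0 [Hat <-]]]].
pose M l := tcomp (cst (unitL B)) (tpar (at' l) (tid B)).
have HM : isTest M by apply: test_detl (test_par_detr Hat (ax_test_id HT B)) (det_cst _).
have [|lam [lam01 elam]] := refine_to_pure Htau Y0k HM phi_pure _ l0.
  rewrite -taus /M -tsum_compl -tsum_parl (test_sum_deff l0 Hat) -(ax_comp_assoc HT).
  have := applyA_prod (deff A) psi phi; rewrite /applyA castCE => ->.
  by rewrite psi_norm (ax_scal1 HT).
by exists lam; split => //; rewrite /applyA castCE (ax_comp_assoc HT).
Qed.

(* The product of two pure normalized states is pure: a refinement tau_k
   and mu (psi (x) phi) agree on all product effects, hence coincide by
   local discriminability. *)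
Lemma pure_prod (A B : Sy) (psi : TR I A) (phi : TR I B) :
  normalized psi -> pure psi -> normalized phi -> pure phi -> pure (prod_state psi phi).
Proof.
move=> psi_n psi_pure phi_n phi_pure.
have Hprod := det_prod_state (normalized_det psi_n) (normalized_det phi_n).
split; first exact: det_trans.
move=> D [Y [tau [Y0 [Htau [taus [k [Y0k ->]]]]]]].
have [mu [mu01 emu]] := applyA_refines_prod psi_n phi_pure Htau Y0k taus
                          (det_trans (ax_deff_test HT A)).
exists mu; split => //.
apply: (ax_local_discr HT); first exact: test_trans.
  by apply: trans_scal => //; exact: det_trans.
move=> a b Ha Hb.
have probE s : prob (castC (unitR I) (tcomp (tpar a b) s)) = pairing (prod_effect a b) s.
  by rewrite /pairing /prod_effect !castCE (ax_comp_assoc HT).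
rewrite !probE.
have [lb [_ elb]] := applyB_refines_prod phi_n psi_pure Htau Y0k taus Hb.
have lbE : lb = mu * pairing b phi.
  have := pairing_prod_applyB (deff A) b (tau k).
  by rewrite pairing_prod_applyA emu elb !pairing_scal psi_n.2; lra.
by rewrite pairing_scal pairing_prod pairing_prod_applyB elb pairing_scal lbE; ring.
Qed.

Definition regroup (A B P : Sy) : TR (sprod P (sprod A B)) (sprod B (sprod A P)) :=
  tcomp (cst (assocS B A P)) (tcomp (tpar (tswap A B) (tid P)) (tswap P (sprod A B))).
Definition regroup_inv (A B P : Sy) : TR (sprod B (sprod A P)) (sprod P (sprod A B)) :=
  tcomp (tswap (sprod A B) P) (tcomp (tpar (tswap B A) (tid P)) (cst (esym (assocS B A P)))).

Lemma det_regroup (A B P : Sy) : det (regroup A B P).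
Proof.
apply: det_comp (det_cst _); apply: det_comp (ax_test_swap HT _ _) _.
exact: det_par (ax_test_swap HT _ _) (ax_test_id HT _).
Qed.
Lemma det_regroup_inv (A B P : Sy) : det (regroup_inv A B P).
Proof.
apply: det_comp (ax_test_swap HT _ _); apply: det_comp (det_cst _) _.
exact: det_par (ax_test_swap HT _ _) (ax_test_id HT _).
Qed.

Lemma regroupK (A B P : Sy) : tcomp (regroup_inv A B P) (regroup A B P) = tid _.
Proof.
rewrite /regroup /regroup_inv; norm.
rewrite (ax_comp_assoc HT (tswap P _)) -par_compr (ax_swap_inv HT) (ax_par_id HT).
by rewrite (ax_comp_idl HT) (ax_swap_inv HT).
Qed.
Lemma regroup_invK (A B P : Sy) : tcomp (regroup A B P) (regroup_inv A B P) = tid _.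
Proof.
rewrite /regroup /regroup_inv; norm.
rewrite (ax_comp_assoc HT _ (tswap _ P) (tswap P _)) (ax_swap_inv HT) (ax_comp_idl HT).
rewrite (ax_comp_assoc HT _ (tpar (tswap B A) (tid P))) -par_compr (ax_swap_inv HT).
by rewrite (ax_par_id HT) (ax_comp_idl HT); norm.
Qed.

Lemma marginal_ancilla (A B Q : Sy) (Psi : TR I (sprod A B)) (Phi : TR I Q) :
  normalized Phi -> marginal (castC (assocS A B Q) (prod_state Psi Phi)) = marginal Psi.
Proof.
move=> [_ Phi_norm].
rewrite /marginal (ax_deff_prod HT) -/(prod_effect (deff B) (deff Q)) applyB_assoc.
by rewrite applyB_prod Phi_norm (ax_scal1 HT).
Qed.

Lemma purification_ancilla (A B Q : Sy) (rho : TR I A) (Psi : TR I (sprod A B))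
    (Phi : TR I Q) :
  isPurification rho Psi -> normalized Phi -> pure Phi ->
  isPurification rho (castC (assocS A B Q) (prod_state Psi Phi)).
Proof.
move=> [Psi_n [Psi_pure <-]] Phi_n Phi_pure; split.
  by apply/det_normalized/det_castC/det_prod_state; exact: normalized_det.
by split; [apply/pure_cast/pure_prod | exact: marginal_ancilla].
Qed.

Lemma purification_swapped (A B P : Sy) (rho : TR I A) (Psi : TR I (sprod A B))
    (Phi : TR I (sprod A P)) :
  isPurification rho Phi -> normalized Psi -> pure Psi ->
  isPurification rho
    (tcomp (tpar (tid A) (regroup A B P)) (castC (assocS A P _) (prod_state Phi Psi))).
Proof.
move=> PPhi Psi_n Psi_pure; have [S_n [S_pure S_marg]] := purification_ancilla PPhi Psi_n Psi_pure.
split.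
  apply/det_normalized/det_comp; first exact: normalized_det.
  exact: det_par (ax_test_id HT _) (det_regroup _ _ _).
split.
  apply: (pure_reversible (W := tpar (tid A) (regroup_inv A B P))) => //.
  - exact: det_par (ax_test_id HT _) (det_regroup _ _ _).
  - exact: det_par (ax_test_id HT _) (det_regroup_inv _ _ _).
  - by rewrite -par_compl regroupK (ax_par_id HT).
  - by rewrite -par_compl regroup_invK (ax_par_id HT).
by rewrite /marginal -applyB_comp (det_channel (det_regroup _ _ _)).
Qed.

Lemma steering_transfer (HP : PurificationPostulate T) (A B P : Sy) (X : finType)
    (rho : TR I A) (Psi : TR I (sprod A B)) (Phi : TR I (sprod A P))
    (b' : X -> TR P I) (rhos : X -> TR I A) :
  isPurification rho Psi -> isPurification rho Phi -> isTest b' ->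
  (forall x, applyB (b' x) Phi = rhos x) ->
  exists b : X -> TR B I, isTest b /\ forall x, rhos x = applyB (b x) Psi.
Proof.
move=> PPsi PPhi Hb' steer; have [Psi_n [Psi_pure _]] := PPsi; have [Phi_n [Phi_pure _]] := PPhi.
have P1 := purification_ancilla PPsi Phi_n Phi_pure.
have P2 := purification_swapped PPhi Psi_n Psi_pure.
have [U [[_ [Ui [Ui_ch [UiU _]]]] eU]] := HP.2 _ _ _ _ (ex_intro _ rho (conj P2 P1)).
(* b'_x (x) e, carried to B(AP) by U^-1 and the inverse regrouping *)
pose E x := tcomp (prod_effect (b' x) (deff (sprod A B)))
                  (tcomp (regroup_inv A B P) Ui).
have HE : isTest E.
  apply: test_detr; first exact: det_comp (channel_det Ui_ch) (det_regroup_inv _ _ _).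
  exact: test_prod_effect_deff.
have E_steer x : applyB (E x) (castC (assocS A B _) (prod_state Psi Phi)) = rhos x.
  rewrite /E applyB_comp par_compl -(ax_comp_assoc HT) eU.
  rewrite [X in tcomp _ X](ax_comp_assoc HT) -par_compl UiU (ax_par_id HT) (ax_comp_idl HT).
  rewrite (ax_comp_assoc HT) -par_compl regroupK (ax_par_id HT) (ax_comp_idl HT).
  by rewrite applyB_assoc applyB_prod Psi_n.2 (ax_scal1 HT) steer.
exists (fun x => tcomp (E x) (append B Phi)); split.
  apply: test_detr HE; exact: det_comp (det_cst _) (det_par (ax_test_id HT _) (normalized_det Phi_n)).
by move=> x; rewrite applyB_comp append_ancilla E_steer.
Qed.

Definition discriminable (X : finType) (C : Sy) (alpha : X -> TR I C) (c : X -> TR C I) :=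
  [/\ forall i, det (alpha i), isTest c &
      forall i j, pairing (c j) (alpha i) = if i == j then 1 else 0].

Lemma discriminable_coarse (X Y : finType) (C : Sy) (alpha : X -> TR I C) (c : X -> TR C I)
    (h : X -> Y) (q : Y -> X) :
  cancel q h -> discriminable alpha c ->
  discriminable (fun y => alpha (q y)) (fun y => tsum (fun x => h x == y) c).
Proof.
move=> qK [Halpha Hc c_alpha]; split => //.
  by apply: (ax_test_coarse HT) => // y; exists (q y); rewrite qK.
move=> i j; rewrite pairing_tsum.
under eq_bigr => x _ do rewrite c_alpha eq_sym.
by rewrite sumR_delta qK.
Qed.

Lemma discriminable_prod (X Y : finType) (C C' : Sy) (alpha : X -> TR I C) (c : X -> TR C I)
    (alpha' : Y -> TR I C') (c' : Y -> TR C' I) :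
  discriminable alpha c -> discriminable alpha' c' ->
  discriminable (fun p : X * Y => prod_state (alpha p.1) (alpha' p.2))
                (fun p : X * Y => prod_effect (c p.1) (c' p.2)).
Proof.
move=> [Ha Hc ca] [Ha' Hc' ca']; split; first by move=> p; exact: det_prod_state.
  exact: test_prod_effect.
move=> [i i'] [j j']; rewrite pairing_prod ca ca' /= xpair_eqE.
by case: (i == j); case: (i' == j') => /=; lra.
Qed.

Lemma discriminable_pair : exists (C : Sy) (alpha : bool -> TR I C) (c : bool -> TR C I),
  discriminable alpha c.
Proof.
have [C [alpha [c [alpha_n [Hc c_alpha]]]]] := ax_perf_dist HT.
by exists C, alpha, c; split => // i; exact: normalized_det.
Qed.

(* Discriminable families of every finite nonempty size, obtained by
   tensoring the pair repeatedly and coarse-graining. *)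
Lemma discriminable_ord n : exists (C : Sy) (alpha : 'I_n.+1 -> TR I C) (c : 'I_n.+1 -> TR C I),
  discriminable alpha c.
Proof.
have [C2 [alpha2 [c2 Hpair]]] := discriminable_pair.
elim: n => [|n [C [alpha [c Hd]]]].
  do 3 eexists; apply: (discriminable_coarse (h := fun _ => ord0) (q := fun _ => false)) Hpair.
  by move=> i; rewrite (ord1 i).
pose h (p : 'I_n.+1 * bool) : 'I_n.+2 := if p.2 then ord_max else lift ord_max p.1.
pose q (i : 'I_n.+2) : 'I_n.+1 * bool :=
  if unlift ord_max i is Some j then (j, false) else (ord0, true).
have qK : cancel q h by move=> i; rewrite /h /q; case: unliftP => [j ->|->].
by do 3 eexists; apply: (discriminable_coarse qK); exact: discriminable_prod Hd Hpair.
Qed.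

Lemma discriminable_exists (X : finType) (x0 : X) :
  exists (C : Sy) (alpha : X -> TR I C) (c : X -> TR C I), discriminable alpha c.
Proof.
have eX : #|X| = (#|X|.-1).+1 by rewrite prednK //; apply/card_gt0P; exists x0.
have [C [alpha [c Hd]]] := discriminable_ord (#|X|.-1).
pose f (x : X) : 'I_(#|X|.-1).+1 := cast_ord eX (enum_rank x).
pose g (i : 'I_(#|X|.-1).+1) : X := enum_val (cast_ord (esym eX) i).
have fK : cancel f g by move=> x; rewrite /f /g cast_ordK enum_rankK.
by do 3 eexists; exact: (discriminable_coarse fK Hd).
Qed.

(* A preparation-test has at least one outcome: its probabilities sum to 1. *)
Lemma preparation_test_inhabited (A : Sy) (X : finType) (rhos : X -> TR I A) :
  isTest rhos -> inhabited X.
Proof.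
move=> Hrhos; case: (pickP (@predT X)) => [x0 _|noX]; first exact: inhabits x0.
have := ax_prob_test HT (test_detl Hrhos (ax_deff_test HT A)).
by rewrite rsumE big_pred0; [lra | move=> x; have := noX x].
Qed.

Definition flagged_mixture (A C : Sy) (X : finType) (rhos : X -> TR I A)
    (alpha : X -> TR I C) : TR I (sprod A C) :=
  tsum predT (fun x => tcomp (append A (alpha x)) (rhos x)).

Lemma det_flagged_mixture (A C : Sy) (X : finType) (rhos : X -> TR I A)
    (alpha : X -> TR I C) (x0 : X) :
  isTest rhos -> (forall x, det (alpha x)) -> det (flagged_mixture rhos alpha).
Proof.
move=> Hrhos Halpha; apply: (test_total x0).
have := ax_test_cond HT (Y := fun _ => unit) (g := fun x (_ : unit) => append A (alpha x))
          Hrhos (fun x => det_comp (det_cst _) (det_par (ax_test_id HT A) (Halpha x))).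
move/(test_reindex (g := fun x : X => existT (fun _ => unit) x tt)
                   (h := fun s : {x : X & unit} => tag s)).
by apply => // -[? []].
Qed.

Lemma applyB_flagged_mixture (A C : Sy) (X : finType) (rhos : X -> TR I A)
    (alpha : X -> TR I C) (b : TR C I) :
  applyB b (flagged_mixture rhos alpha)
  = tsum predT (fun x => tscal (pairing b (alpha x)) (rhos x)).
Proof.
rewrite /flagged_mixture (tsum_map _ _ (L := applyB b)).
- by rewrite !tsumE; apply: eq_bigr => x _; rewrite applyB_append.
- by move=> s s'; rewrite /applyB !castCE !(ax_comp_addr HT).
- by rewrite /applyB castCE !comp0t.
Qed.

Lemma flagged_purification (HP : PurificationPostulate T) (A : Sy) (X : finType)
    (rhos : X -> TR I A) (x0 : X) :
  isTest rhos ->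
  exists (P : Sy) (Phi : TR I (sprod A P)) (b : X -> TR P I) (sigma : X -> TR I P),
    [/\ isPurification (tsum predT rhos) Phi, isTest b,
        forall x, applyB (b x) Phi = rhos x,
        forall x, normalized (sigma x) &
        forall i j, pairing (b j) (sigma i) = if i == j then 1 else 0].
Proof.
move=> Hrhos; have [C [alpha [c [Halpha Hc c_alpha]]]] := discriminable_exists x0.
have dS := det_flagged_mixture x0 Hrhos Halpha.
have [D [Phi [Phi_n [Phi_pure Phi_marg]]]] := HP.1 _ _ (det_normalized dS).
pose b x := prod_effect (c x) (deff D).
have b_steer x : applyB (b x) (castC (assocS A C D) Phi)
                 = tsum predT (fun y => tscal (pairing (c x) (alpha y)) (rhos y)).
  by rewrite applyB_assoc -/(marginal Phi) Phi_marg applyB_flagged_mixture.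
pose eta := applyA (deff (sprod A C)) Phi.
have eta_n : normalized eta.
  apply/det_normalized/det_castC/det_comp; first exact: normalized_det.
  exact: det_par (ax_deff_test HT _) (ax_test_id HT _).
exists (sprod C D), (castC (assocS A C D) Phi), b, (fun x => prod_state (alpha x) eta); split.
- split; first exact/det_normalized/det_castC/normalized_det.
  split; first exact: pure_cast.
  rewrite /marginal (ax_deff_prod HT) -/(prod_effect (deff C) (deff D)) applyB_assoc.
  rewrite -/(marginal Phi) Phi_marg applyB_flagged_mixture !tsumE.
  by apply: eq_bigr => y _; rewrite (det_normalized (Halpha y)).2 (ax_scal1 HT).
- exact: test_prod_effect_deff.
- by move=> x; rewrite b_steer; apply: tsum_delta => y; exact: c_alpha.
- by move=> x; apply/det_normalized/det_prod_state => //; exact: normalized_det.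
- by move=> i j; rewrite pairing_prod c_alpha eta_n.2 Rmult_1_r.
Qed.

End OperationalCalculus.

Theorem mainTheorem3 (T : OPTData) (HT : OPTAxioms T)
  (HP : PurificationPostulate T)
  (A : Sys T) (X : finType) (rhos : X -> TR sI A) (Hrhos : isTest rhos) :
  (forall (B : Sys T) (Psi : TR sI (sprod A B)),
     isPurification (tsum predT rhos) Psi ->
     exists b : X -> TR B sI, isTest b /\ forall i, rhos i = applyB (b i) Psi)
  /\
  (exists (B : Sys T) (Psi : TR sI (sprod A B)),
     isPurification (tsum predT rhos) Psi /\
     exists b : X -> TR B sI,
       isTest b /\ (forall i, rhos i = applyB (b i) Psi) /\
       exists sigma : X -> TR sI B,
         (forall i, normalized (sigma i)) /\
         forall i j, pairing (b j) (sigma i) = (if i == j then 1 else 0)%R).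
Proof.
have [x0] := preparation_test_inhabited HT Hrhos.
have [P [Phi [b [sigma [PPhi Hb steer sigma_n b_sigma]]]]] := flagged_purification HT HP x0 Hrhos.
split.
  move=> B Psi PPsi; exact: (steering_transfer HT HP PPsi PPhi Hb steer).
exists P, Phi; split => //; exists b; split => //; split; first by move=> x; rewrite steer.
by exists sigma.
Qed.
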